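(* Let $A=\begin{pmatrix} a & b\\ b & d\end{pmatrix}$ be a positive symmetric $2\times 2$ matrix. Let $\lambda=\left(abd+b^2\sqrt{ad}\right)^{-1/2}$ and $D=\begin{pmatrix} \lambda\sqrt{bd} & 0\\ 0 & \lambda\sqrt{ab}\end{pmatrix}$. Then the alternate minimization limit of $A$ is the doubly stochastic matrix \[ S(A)=DAD=\begin{pmatrix}\alpha & \beta\\ \beta & \alpha\end{pmatrix},\qquad \alpha=\frac{\sqrt{ad}}{\sqrt{ad}+b},\quad \beta=\frac{b}{\sqrt{ad}+b}. \]
   Context: A positive matrix has all entries positive. For an $n\times n$ matrix $A=(a_{i,j})$ let $\mathrm{row}_i(A)=\sum_j a_{i,j}$ and $\mathrm{col}_j(A)=\sum_i a_{i,j}$; $A$ is doubly stochastic if all row and column sums equal $1$. For positive $A$ let $X(A)=\mathrm{diag}(1/\mathrm{row}_1(A),\ldots,1/\mathrm{row}_n(A))$ and $Y(A)=\mathrm{diag}(1/\mathrm{col}_1(A),\ldots,1/\mathrm{col}_n(A))$. The alternate minimization sequence of $A$ is $A^{(0)}=A$, $A^{(2k+1)}=A^{(2k)}\,Y(A^{(2k)})$, $A^{(2k+2)}=X(A^{(2k+1)})\,A^{(2k+1)}$ ($k\ge 0$); its limit $S(A)=\lim_{\ell\to\infty}A^{(\ell)}$ is the alternate minimization limit of $A$. *)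

From HB Require Import structures.
From mathcomp Require Import all_boot all_order all_algebra.
From mathcomp Require Import all_classical all_reals topology normedtype sequences.
Set Implicit Arguments. Unset Strict Implicit. Unset Printing Implicit Defensive.
Import Order.TTheory GRing.Theory Num.Theory.
Import numFieldNormedType.Exports.
Local Open Scope classical_set_scope.
Local Open Scope ring_scope.

Section Defs.
Variables (R : realType) (n : nat).

Definition positive_mx (A : 'M[R]_n) : Prop := forall i j, 0 < A i j.

Definition row_sum (A : 'M[R]_n) (i : 'I_n) : R := \sum_(j < n) A i j.
Definition col_sum (A : 'M[R]_n) (j : 'I_n) : R := \sum_(i < n) A i j.

Definition doubly_stochastic (A : 'M[R]_n) : Prop :=
  (forall i, row_sum A i = 1) /\ (forall j, col_sum A j = 1).

Definition Xmx (A : 'M[R]_n) : 'M[R]_n := diag_mx (\row_i (row_sum A i)^-1).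
Definition Ymx (A : 'M[R]_n) : 'M[R]_n := diag_mx (\row_j (col_sum A j)^-1).

(* Alternate minimization sequence: A^(0) = A,
   A^(2k+1) = A^(2k) Y(A^(2k)),  A^(2k+2) = X(A^(2k+1)) A^(2k+1). *)
Fixpoint alt_min (A : 'M[R]_n) (l : nat) : 'M[R]_n :=
  match l with
  | 0 => A
  | l'.+1 => let B := alt_min A l' in
             if odd l' then Xmx B *m B else B *m Ymx B
  end.

(* S is the alternate minimization limit of A: A^(l) -> S (entrywise,
   i.e. in the finite-dimensional matrix topology). *)
Definition is_alt_min_limit (A S : 'M[R]_n) : Prop :=
  forall i j, (fun l : nat => alt_min A l i j) @ \oo --> S i j.

End Defs.

Definition mx2 {R : ringType} (x y z w : R) : 'M[R]_2 :=
  \matrix_(i < 2, j < 2)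
     if i == 0 :> nat then (if j == 0 :> nat then x else y)
     else (if j == 0 :> nat then z else w).

(* Every iterate of alternate minimization has the form D1 A D2 with D1, D2
   positive diagonal, and normalizing the rows (columns) forgets D1 (D2).  For
   A = [[a, b], [b, d]] the odd (even) iterates are therefore determined by the
   ratio t of the diagonal entries of D1 (D2), and each step maps t to
   (b t + d) / (a t + b).  In the Cayley coordinate (t - s) / (t + s), with
   s = sqrt(ad) / a the positive fixed point, this Moebius map is multiplication
   by (b - sqrt(ad)) / (b + sqrt(ad)), of modulus < 1.  Hence t tends to s and
   all iterates tend to the doubly stochastic matrix of ratio s, which is the
   explicit D A D. *)

From HB Require Import structures.
From mathcomp Require Import all_boot all_order all_algebra.
From mathcomp Require Import all_classical all_reals topology normedtype sequences.
From mathcomp Require Import ring lra.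
Import Order.TTheory GRing.Theory Num.Theory.
Import numFieldNormedType.Exports.
Local Open Scope classical_set_scope.
Local Open Scope ring_scope.
Set Implicit Arguments.
Unset Strict Implicit.
Unset Printing Implicit Defensive.

Ltac positivity :=
  repeat first [ assumption | apply: addr_gt0 | apply: mulr_gt0 | apply: divr_gt0
               | rewrite invr_gt0 | apply: exprn_gt0 | rewrite sqrtr_gt0 ].
Ltac nonzero := apply/lt0r_neq0; positivity.
Ltac field_pos := field; repeat (apply/andP; split); nonzero.

Lemma cvg_if_odd (T : topologicalType) (u v : nat -> T) (x : T) :
  u @ \oo --> x -> v @ \oo --> x ->
  (fun n => if odd n then u n else v n) @ \oo --> x.
Proof.
move=> ux vx P xP.
have := ux _ xP; have := vx _ xP; rewrite !nbhs_simpl /=.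
by apply: filterS2 => n /= Pv Pu; case: (odd n).
Qed.

Lemma ord2P (P : 'I_2 -> Prop) : P 0 -> P 1 -> forall i, P i.
Proof.
move=> P0 P1 [[|[|i]] lti] //.
- by rewrite (_ : Ordinal lti = 0) //; apply: val_inj.
- by rewrite (_ : Ordinal lti = 1) //; apply: val_inj.
Qed.

Lemma big_ord2 (M : nmodType) (F : 'I_2 -> M) : \sum_(i < 2) F i = F 0 + F 1.
Proof. by rewrite big_ord_recl big_ord1; congr (_ + F _); apply: val_inj. Qed.

Section TwoByTwo.
Variable R : nzRingType.
Implicit Types x y z w : R.

Lemma mx2_00 x y z w : mx2 x y z w 0 0 = x. Proof. by rewrite mxE. Qed.
Lemma mx2_01 x y z w : mx2 x y z w 0 1 = y. Proof. by rewrite mxE. Qed.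
Lemma mx2_10 x y z w : mx2 x y z w 1 0 = z. Proof. by rewrite mxE. Qed.
Lemma mx2_11 x y z w : mx2 x y z w 1 1 = w. Proof. by rewrite mxE. Qed.

Definition mx2E := (mx2_00, mx2_01, mx2_10, mx2_11).

Lemma mx2P (M N : 'M[R]_2) :
  M 0 0 = N 0 0 -> M 0 1 = N 0 1 -> M 1 0 = N 1 0 -> M 1 1 = N 1 1 -> M = N.
Proof. by move=> ? ? ? ?; apply/matrixP; apply: ord2P; apply: ord2P. Qed.

Lemma mul_mx2 x y z w x' y' z' w' : mx2 x y z w *m mx2 x' y' z' w' =
  mx2 (x * x' + y * z') (x * y' + y * w') (z * x' + w * z') (z * y' + w * w').
Proof. by apply: mx2P; rewrite !mxE big_ord2 !mx2E. Qed.

End TwoByTwo.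

Lemma alt_minS (R : realType) (n : nat) (A : 'M[R]_n) l : alt_min A l.+1 =
  if odd l then Xmx (alt_min A l) *m alt_min A l else alt_min A l *m Ymx (alt_min A l).
Proof. by []. Qed.

Section Normalization.
Variable R : realType.
Implicit Types x y z w : R.

Definition row_normalize2 x y z w :=
  mx2 (x / (x + y)) (y / (x + y)) (z / (z + w)) (w / (z + w)).
Definition col_normalize2 x y z w :=
  mx2 (x / (x + z)) (y / (y + w)) (z / (x + z)) (w / (y + w)).

Lemma Xmx_mx2 x y z w :
  Xmx (mx2 x y z w) *m mx2 x y z w = row_normalize2 x y z w.
Proof.
by apply: mx2P; rewrite !mxE big_ord2 !mxE /row_sum !big_ord2 !mx2E /=
  ?mulr1n ?mulr0n ?mul0r ?addr0 ?add0r mulrC.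
Qed.

Lemma Ymx_mx2 x y z w :
  mx2 x y z w *m Ymx (mx2 x y z w) = col_normalize2 x y z w.
Proof.
by apply: mx2P; rewrite !mxE big_ord2 !mxE /col_sum !big_ord2 !mx2E /=
  ?mulr1n ?mulr0n ?mulr0 ?addr0 ?add0r.
Qed.

Lemma doubly_stochastic_mx2 x y : x + y = 1 -> doubly_stochastic (mx2 x y y x).
Proof.
move=> xy1; split; apply: ord2P;
  by rewrite /row_sum /col_sum big_ord2 !mx2E // addrC.
Qed.

End Normalization.

Section Limits.
Variable R : realType.

Lemma cvg_divr (u v : nat -> R) (u0 v0 : R) : v0 != 0 ->
  u @ \oo --> u0 -> v @ \oo --> v0 -> (fun l => u l / v l) @ \oo --> u0 / v0.
Proof. by move=> v0_neq0 uu0 vv0; apply: cvgM uu0 (cvgV v0_neq0 vv0). Qed.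

Lemma cvg_mx2 (x y z w : nat -> R) (x0 y0 z0 w0 : R) :
  x @ \oo --> x0 -> y @ \oo --> y0 -> z @ \oo --> z0 -> w @ \oo --> w0 ->
  forall i j, (fun l => mx2 (x l) (y l) (z l) (w l) i j) @ \oo --> mx2 x0 y0 z0 w0 i j.
Proof.
by move=> ? ? ? ?; apply: ord2P; apply: ord2P; under eq_cvg do rewrite mx2E; rewrite mx2E.
Qed.

Definition cayley (s t : R) := (t - s) / (t + s).

Lemma cayleyK (s t : R) : 0 < s -> 0 < t ->
  s * (1 + cayley s t) / (1 - cayley s t) = t.
Proof.
move=> s_gt0 t_gt0; rewrite /cayley; field.
by rewrite (_ : t + s - (t - s) = s + s); [apply/andP; split; nonzero | ring].
Qed.

Lemma cvg_cayley_geometric (s k : R) (u : nat -> R) :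
  0 < s -> `|k| < 1 -> (forall l, 0 < u l) ->
  (forall l, cayley s (u l.+1) = k * cayley s (u l)) -> u @ \oo --> s.
Proof.
move=> s_gt0 k_lt1 u_gt0 u_step.
have cayley_u l : cayley s (u l) = k ^+ l * cayley s (u 0).
  by elim: l => [|l IH]; rewrite ?mul1r // u_step IH exprS mulrA.
have cvg_cayley : (fun l => cayley s (u l)) @ \oo --> 0.
  rewrite (funext cayley_u) -(mul0r (cayley s (u 0))).
  by apply: cvgM; [exact: cvg_expr | exact: cvg_cst].
rewrite -(funext (fun l => cayleyK s_gt0 (u_gt0 l))).
have lim_s : s * (1 + 0) / (1 - 0) = s by rewrite addr0 subr0 mulr1 divr1.
rewrite -[X in _ --> X]lim_s.
apply: cvg_divr; first by rewrite subr0 oner_neq0.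
- exact: cvgM (cvg_cst _) (cvgD (cvg_cst _) cvg_cayley).
- exact: cvgB (cvg_cst _) cvg_cayley.
Qed.

Lemma norm_subr_div_addr_lt1 (b r : R) : 0 < b -> 0 < r -> `|(b - r) / (b + r)| < 1.
Proof.
move=> b_gt0 r_gt0.
rewrite normrM normfV (gtr0_norm (addr_gt0 b_gt0 r_gt0)) ltr_pdivrMr ?addr_gt0 //.
by rewrite mul1r ltr_norml; apply/andP; split; lra.
Qed.

End Limits.

Section AlternateMinimization2.
Variables (R : realType) (a b d : R).
Hypotheses (a_gt0 : 0 < a) (b_gt0 : 0 < b) (d_gt0 : 0 < d).

Let r := Num.sqrt (a * d).
Let r_gt0 : 0 < r. Proof. by positivity. Qed.
Let d_def : d = r ^+ 2 / a.
Proof. by rewrite sqr_sqrtr ?mulr_ge0 ?ltW //; field; nonzero. Qed.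
Let s := r / a.
Let s_gt0 : 0 < s. Proof. by rewrite /s; positivity. Qed.

(* The column normalization of diag(t, 1) A and the row normalization of
   A diag(t, 1). *)
Definition col_iterate t := col_normalize2 (t * a) (t * b) b d.
Definition row_iterate t := row_normalize2 (t * a) b (t * b) d.

Definition ratio_step t := (b * t + d) / (a * t + b).
Definition ratio l := iter l ratio_step 1.

Lemma ratio_gt0 l : 0 < ratio l.
Proof. by elim: l => [|l IH] //=; rewrite /ratio_step; positivity. Qed.

Lemma row_col_iterate t : 0 < t ->
  Xmx (col_iterate t) *m col_iterate t = row_iterate (ratio_step t).
Proof. by move=> t_gt0; rewrite Xmx_mx2 /row_iterate /ratio_step; congr mx2; field_pos. Qed.

Lemma col_row_iterate t : 0 < t ->
  row_iterate t *m Ymx (row_iterate t) = col_iterate (ratio_step t).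
Proof. by move=> t_gt0; rewrite Ymx_mx2 /col_iterate /ratio_step; congr mx2; field_pos. Qed.

Lemma alt_min_mx2 l : alt_min (mx2 a b b d) l.+1 =
  if odd l then row_iterate (ratio l) else col_iterate (ratio l).
Proof.
elim: l => [|l IH]; first by rewrite /= Ymx_mx2 /col_iterate !mul1r.
rewrite alt_minS IH /=; case: (odd l) => /=.
- exact: col_row_iterate (ratio_gt0 l).
- exact: row_col_iterate (ratio_gt0 l).
Qed.

Lemma cayley_ratio_step t : 0 < t ->
  cayley s (ratio_step t) = (b - r) / (b + r) * cayley s t.
Proof. by move=> t_gt0; rewrite /cayley /ratio_step /s d_def; field_pos. Qed.

Lemma cvg_ratio : ratio @ \oo --> s.
Proof.
apply: cvg_cayley_geometric s_gt0 (norm_subr_div_addr_lt1 b_gt0 r_gt0) ratio_gt0 _.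
by move=> l; rewrite /ratio iterS cayley_ratio_step ?ratio_gt0.
Qed.

Let alpha := r / (r + b).
Let beta := b / (r + b).

Lemma col_iterate_limit : col_iterate s = mx2 alpha beta beta alpha.
Proof. by rewrite /col_iterate /s /alpha /beta d_def; congr mx2; field_pos. Qed.

Lemma row_iterate_limit : row_iterate s = mx2 alpha beta beta alpha.
Proof. by rewrite /row_iterate /s /alpha /beta d_def; congr mx2; field_pos. Qed.

Lemma alt_min_limit_mx2 : is_alt_min_limit (mx2 a b b d) (mx2 alpha beta beta alpha).
Proof.
have ratio_M c : (fun l => ratio l * c) @ \oo --> s * c.
  exact: cvgM cvg_ratio (cvg_cst c).
rewrite /is_alt_min_limit => i j.
rewrite -(cvg_shiftS _ (nbhs (mx2 alpha beta beta alpha i j))) /mk_sequence.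
have -> : (fun l => alt_min (mx2 a b b d) l.+1 i j) =
    fun l => if odd l then row_iterate (ratio l) i j else col_iterate (ratio l) i j.
  by apply/funext => l; rewrite alt_min_mx2; case: odd.
apply: cvg_if_odd; [rewrite -row_iterate_limit | rewrite -col_iterate_limit];
  apply: cvg_mx2; apply: cvg_divr;
  first [nonzero | exact: ratio_M | exact: cvgD (ratio_M _) (cvg_cst _) | exact: cvg_cst].
Qed.

End AlternateMinimization2.

Lemma diag_scaling_mx2 (R : realType) (a b d : R) : 0 < a -> 0 < b -> 0 < d ->
  let lambda := (Num.sqrt (a * b * d + b ^+ 2 * Num.sqrt (a * d)))^-1 in
  let D := mx2 (lambda * Num.sqrt (b * d)) 0 0 (lambda * Num.sqrt (a * b)) in
  D *m mx2 a b b d *m D =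
    mx2 (Num.sqrt (a * d) / (Num.sqrt (a * d) + b)) (b / (Num.sqrt (a * d) + b))
        (b / (Num.sqrt (a * d) + b)) (Num.sqrt (a * d) / (Num.sqrt (a * d) + b)).
Proof.
move=> a_gt0 b_gt0 d_gt0 lambda D; rewrite /D /lambda {D lambda}.
have sqr_sqrt x : 0 < x -> Num.sqrt x ^+ 2 = x by move=> x_gt0; rewrite sqr_sqrtr // ltW.
have pq : Num.sqrt (b * d) * Num.sqrt (a * b) = b * Num.sqrt (a * d).
  rewrite -sqrtrM; last by rewrite ltW //; positivity.
  rewrite (_ : b * d * (a * b) = b ^+ 2 * (a * d)); last by ring.
  by rewrite sqrtrM ?sqrtr_sqr ?gtr0_norm // ltW // exprn_gt0.
have r2 : Num.sqrt (a * d) ^+ 2 = a * d by apply: sqr_sqrt; positivity.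
have p2 : Num.sqrt (b * d) ^+ 2 = b * d by apply: sqr_sqrt; positivity.
have q2 : Num.sqrt (a * b) ^+ 2 = a * b by apply: sqr_sqrt; positivity.
have r_gt0 : 0 < Num.sqrt (a * d) by positivity.
set r := Num.sqrt (a * d) in pq r2 r_gt0 *.
set p := Num.sqrt (b * d) in pq p2 *; set q := Num.sqrt (a * b) in pq q2 *.
set lambda := (Num.sqrt _)^-1.
have lambda2 : lambda ^+ 2 = (b * r * (r + b))^-1.
  rewrite exprVn sqr_sqrt; last by positivity.
  by rewrite (_ : a * b * d = b * r ^+ 2); [congr _^-1; ring | rewrite r2; ring].
have -> : mx2 (lambda * p) 0 0 (lambda * q) *m mx2 a b b d *m
          mx2 (lambda * p) 0 0 (lambda * q) =
    lambda ^+ 2 *: mx2 (p ^+ 2 * a) (p * q * b) (p * q * b) (q ^+ 2 * d).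
  by apply: mx2P; rewrite !mul_mx2 !mxE /=; ring.
have d_def : d = r ^+ 2 / a by rewrite r2; field; nonzero.
by rewrite lambda2 p2 q2 pq; apply: mx2P; rewrite !mxE /= ?d_def; field_pos.
Qed.

Theorem theorem6 (R : realType) (a b d : R) :
  positive_mx (mx2 a b b d) ->
  let A := mx2 a b b d in
  let lambda := (Num.sqrt (a * b * d + b ^+ 2 * Num.sqrt (a * d)))^-1 in
  let D := mx2 (lambda * Num.sqrt (b * d)) 0 0 (lambda * Num.sqrt (a * b)) in
  let alpha := Num.sqrt (a * d) / (Num.sqrt (a * d) + b) in
  let beta := b / (Num.sqrt (a * d) + b) in
  is_alt_min_limit A (D *m A *m D) /\
  D *m A *m D = mx2 alpha beta beta alpha /\
  doubly_stochastic (D *m A *m D).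
Proof.
move=> A_pos; have := A_pos 0 0; have := A_pos 0 1; have := A_pos 1 1.
rewrite !mx2E => d_gt0 b_gt0 a_gt0 A lambda D alpha beta.
have DAD : D *m A *m D = mx2 alpha beta beta alpha := diag_scaling_mx2 a_gt0 b_gt0 d_gt0.
rewrite DAD; split; first exact: alt_min_limit_mx2.
split=> //; apply: doubly_stochastic_mx2.
by rewrite /alpha /beta -mulrDl divff //; nonzero.
Qed.
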